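(* Let $(u_\beta)_{\beta<\alpha}$, with $\alpha\ge1$, be a densely non-increasing sequence of prime words. Then $u_0$ is the longest prime prefix of the product $\prod_{\beta<\alpha}u_\beta$.
   Context: $A$ is a finite alphabet with a linear order $<_A$. Words are sequences of letters indexed by countable ordinals; $\prod$ denotes ordered concatenation and $x^\alpha$ the concatenation of $\alpha$ copies of $x$. A prefix of $x$ is $x[0,\gamma)$, a suffix is $x[\gamma,|x|)$, proper if $0<\gamma<|x|$. Write $x<_{str}x'$ if there are letters $a<_Ab$ and words $y,z,z'$ with $x=yaz$, $x'=ybz'$; $x\le_{lex}x'$ iff $x$ is a prefix of $x'$ or $x<_{str}x'$. A word is primitive if $x=y^\alpha$ implies $\alpha=1$ and $y=x$; $w$ is prime if it is primitive and every proper suffix $z$ satisfies $w\le_{lex}z$. A sequence $(u_\beta)_{\beta<\alpha}$ of words is densely non-increasing if for all $\gamma<\gamma'\le\alpha$, either $u_\beta=u_\gamma$ for all $\gamma\le\beta<\gamma'$, or there exist $\gamma\le\beta<\beta'<\gamma'$ with $u_\beta>_{lex}u_{\beta'}$. *)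

(* Transfinite words over a finite linearly ordered alphabet,
   represented as countable well-ordered carriers with a labelling; words are
   compared up to order-and-label isomorphism ([weq]). *)
From mathcomp Require Import all_boot all_order.
Set Implicit Arguments. Unset Strict Implicit. Unset Printing Implicit Defensive.

Definition is_cwo (T : Type) (lt : T -> T -> Prop) : Prop :=
  [/\ exists f : T -> nat, injective f,
      (forall a, ~ lt a a),
      (forall a b c, lt a b -> lt b c -> lt a c),
      (forall a b, a <> b -> lt a b \/ lt b a)
    & well_founded lt].

Section Words.
Context {d : Order.disp_t} {A : finOrderType d}.

Record word := Word { wcar : Type; wlt : wcar -> wcar -> Prop; wlab : wcar -> A }.

Definition is_word (x : word) : Prop := is_cwo (@wlt x).

Definition weq (x y : word) : Prop :=
  exists f : wcar x -> wcar y,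
    [/\ bijective f,
        (forall a b, wlt a b <-> wlt (f a) (f b))
      & (forall a, wlab (f a) = wlab a)].

Definition nonempty_word (x : word) : Prop := inhabited (wcar x).

Definition letter (a : A) : word := @Word unit (fun _ _ => False) (fun _ => a).

Definition wcat (x y : word) : word :=
  @Word (wcar x + wcar y)%type
    (fun p q => match p, q with
                | inl a, inl b => wlt a b
                | inl _, inr _ => True
                | inr _, inl _ => False
                | inr a, inr b => wlt a b
                end)
    (fun p => match p with inl a => wlab a | inr b => wlab b end).

Definition wprod (I : Type) (ltI : I -> I -> Prop) (u : I -> word) : word :=
  @Word {i : I & wcar (u i)}
    (fun p q => ltI (projT1 p) (projT1 q) \/
       exists i (a b : wcar (u i)),
         [/\ p = existT _ i a, q = existT _ i b & wlt a b])
    (fun p => wlab (projT2 p)).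

Definition wpow (J : Type) (ltJ : J -> J -> Prop) (y : word) : word :=
  wprod ltJ (fun _ => y).

Definition is_prefix (p x : word) : Prop :=
  exists z, is_word z /\ weq x (wcat p z).
Definition is_proper_suffix (z x : word) : Prop :=
  exists p, [/\ is_word p, nonempty_word p, nonempty_word z & weq x (wcat p z)].

Definition strlt (x x' : word) : Prop :=
  exists (a b : A) (y z z' : word),
    [/\ (a < b)%O, is_word y, is_word z, is_word z' &
        weq x (wcat (wcat y (letter a)) z) /\
        weq x' (wcat (wcat y (letter b)) z')].

Definition lexle (x x' : word) : Prop := is_prefix x x' \/ strlt x x'.
Definition lexlt (x x' : word) : Prop := lexle x x' /\ ~ weq x x'.

Definition primitive (x : word) : Prop :=
  forall (J : Type) (ltJ : J -> J -> Prop) (y : word),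
    is_cwo ltJ -> is_word y -> weq x (wpow ltJ y) ->
    (exists j0 : J, forall j, j = j0) /\ weq y x.

Definition prime_word (w : word) : Prop :=
  primitive w /\ forall z, is_word z -> is_proper_suffix z w -> lexle w z.

(* densely non-increasing sequence (u_beta)_{beta < alpha}, with the index
   ordinal alpha given as (I, ltI); the upper bound gamma' <= alpha is an
   element of [option I], [None] standing for alpha itself *)
Definition below (I : Type) (ltI : I -> I -> Prop) (b : I) (g' : option I) : Prop :=
  match g' with Some g => ltI b g | None => True end.

Definition dense_nonincr (I : Type) (ltI : I -> I -> Prop) (u : I -> word) : Prop :=
  forall (g : I) (g' : option I), below ltI g g' ->
    (forall b, (b = g \/ ltI g b) -> below ltI b g' -> weq (u b) (u g)) \/
    (exists b b', [/\ b = g \/ ltI g b, ltI b b', below ltI b' g'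
                   & lexlt (u b') (u b)]).

End Words.

(* Let p be a prime prefix of W = prod_b u_b reaching beyond the first block u_0.
   Since u_0 is a prefix of p and p is below each of its suffixes, u_0 is below
   the suffix of p starting at any block b.  With density and well-founded
   induction this gives u_b <= u_g for covered blocks g <= b; hence every fully
   covered block is a prefix of u_0, and a partially covered block b would give
   u_b <= u_0 <= (a proper prefix of u_b).  So p is a product of whole blocks.
   Take a covered block c with u_c shortest: all covered blocks from c on equal
   u_c.  If u_c = u_0, p is a nontrivial power of u_0, against primitivity.
   Otherwise u_0 <= u_c^beta with u_c a proper prefix of u_0, impossible for a
   prime word: the suffix of u_0 starting at the copy of u_c where u_0 ends or
   first differs is strictly below u_c, hence below u_0. *)

From mathcomp Require Import all_boot all_order.
From Stdlib Require Import Classical ClassicalEpsilon ProofIrrelevance Wellfounded.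
Set Implicit Arguments. Unset Strict Implicit. Unset Printing Implicit Defensive.
Import Order.TTheory.

Section WellOrder.
Variables (T : Type) (lt : T -> T -> Prop).
Hypothesis hlt : is_cwo lt.

Lemma cwo_irr a : ~ lt a a.
Proof. by case: hlt => _ h _ _ _; apply: h. Qed.

Lemma cwo_trans a b c : lt a b -> lt b c -> lt a c.
Proof. by case: hlt => _ _ h _ _; apply: h. Qed.

Lemma cwo_wf : well_founded lt.
Proof. by case: hlt. Qed.

Lemma cwo_tot a b : lt a b \/ a = b \/ lt b a.
Proof. case: hlt => _ _ _ h _; case: (classic (a = b)) => [->|/h[]]; tauto. Qed.

Lemma cwo_min (P : T -> Prop) :
  (exists a, P a) -> exists m, P m /\ forall a, P a -> ~ lt a m.
Proof.
move=> [a Pa]; apply: NNPP => hn.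
suff : forall b, Acc lt b -> ~ P b by move/(_ a (cwo_wf a)).
move=> b; elim=> {}b _ IH Pb; apply: hn; exists b; split=> // c Pc hcb.
exact: IH c hcb Pc.
Qed.

Lemma cwo_preimage (T' : Type) (f : T' -> T) :
  injective f -> is_cwo (fun a b => lt (f a) (f b)).
Proof.
case: hlt => [[g hg] hirr htr htot hwf] hf; split.
- by exists (g \o f) => a b /hg /hf.
- by move=> a; apply: hirr.
- by move=> a b c; apply: htr.
- by move=> a b hab; apply: htot => /hf.
- exact: Inverse_Image.wf_inverse_image.
Qed.

End WellOrder.

Lemma cwo_sig (T : Type) (lt : T -> T -> Prop) (P : T -> Prop) :
  is_cwo lt -> is_cwo (fun a b : {x | P x} => lt (proj1_sig a) (proj1_sig b)).
Proof.
move=> hlt; apply: cwo_preimage => // [[a ha] [b hb]] /= eab.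
exact: subset_eq_compat.
Qed.

Lemma cwo_downset_inj (T : Type) (lt : T -> T -> Prop) b1 b2 : is_cwo lt ->
  (forall c, lt c b1 <-> lt c b2) -> b1 = b2.
Proof.
move=> hlt hb; case: (cwo_tot hlt b1 b2) => [h|[//|h]].
- by case: (cwo_irr hlt (proj2 (hb b1) h)).
- by case: (cwo_irr hlt (proj1 (hb b2) h)).
Qed.

Section SegmentIsomorphisms.
Context {d : Order.disp_t} {A : finOrderType d}.
Local Notation word := (@word d A).

Definition wsub (x : word) (S : wcar x -> Prop) : word :=
  @Word d A {a | S a} (fun a b => wlt (proj1_sig a) (proj1_sig b))
    (fun a => wlab (proj1_sig a)).

Lemma wsub_word x S : is_word x -> is_word (@wsub x S).
Proof. exact: cwo_sig. Qed.

(* [R] matches an initial segment of [x] with one of [y], preserving order and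
   letters; comparing words through such relations avoids ordinal arithmetic. *)
Definition seg_iso (x y : word) (R : wcar x -> wcar y -> Prop) :=
  [/\ forall a b a' b', R a b -> R a' b' -> (wlt a a' <-> wlt b b'),
      forall a b a', R a b -> wlt a' a -> exists b', R a' b',
      forall a b b', R a b -> wlt b' b -> exists a', R a' b'
    & forall a b, R a b -> wlab a = wlab b].

Definition ltotal (x y : word) (R : wcar x -> wcar y -> Prop) := forall a, exists b, R a b.
Definition rtotal (x y : word) (R : wcar x -> wcar y -> Prop) := forall b, exists a, R a b.
Definition rel_inv (x y : word) (R : wcar x -> wcar y -> Prop) := fun b a => R a b.
Definition rel_comp (x y z : word) (R1 : wcar x -> wcar y -> Prop)
  (R2 : wcar y -> wcar z -> Prop) := fun a c => exists b, R1 a b /\ R2 b c.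

Lemma seg_iso_id x : seg_iso (fun a b : wcar x => a = b).
Proof. by split=> [a b a' b' -> ->|a b a'|a b b'|a b ->] //; eexists. Qed.

Lemma seg_iso_inv x y R : @seg_iso x y R -> seg_iso (rel_inv R).
Proof.
case=> h1 h2 h3 h4; split; rewrite /rel_inv.
- by move=> a b a' b' H H'; apply: iff_sym; apply: h1.
- by move=> b a b' H; apply: h3 H.
- by move=> b a a' H; apply: h2 H.
- by move=> a b /h4.
Qed.

Lemma seg_iso_comp x y z R1 R2 :
  @seg_iso x y R1 -> @seg_iso y z R2 -> seg_iso (rel_comp R1 R2).
Proof.
case=> h1 h2 h3 h4 [k1 k2 k3 k4]; split; rewrite /rel_comp.
- move=> a c a' c' [b [H1 H2]] [b' [H1' H2']].
  by rewrite (h1 _ _ _ _ H1 H1'); apply: k1.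
- move=> a c a' [b [H1 H2]] hlt; have [b' Hb'] := h2 _ _ _ H1 hlt.
  have [c' Hc'] := k2 _ _ b' H2 (proj1 (h1 _ _ _ _ Hb' H1) hlt).
  by exists c', b'.
- move=> a c c' [b [H1 H2]] hlt; have [b' Hb'] := k3 _ _ _ H2 hlt.
  have [a' Ha'] := h3 _ _ b' H1 (proj2 (k1 _ _ _ _ Hb' H2) hlt).
  by exists a', b'.
- by move=> a c [b [/h4 -> /k4]].
Qed.

Definition cut_at (x y : word) (R : wcar x -> wcar y -> Prop) a b :=
  (forall a', (exists b', R a' b') <-> wlt a' a) /\
  (forall b', (exists a', R a' b') <-> wlt b' b).

Lemma ltotal_comp x y z R1 R2 :
  @ltotal x y R1 -> @ltotal y z R2 -> ltotal (rel_comp R1 R2).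
Proof. by move=> F1 F2 a; have [b Hb] := F1 a; have [c Hc] := F2 b; exists c, b. Qed.

Section TwoWords.
Variables x y : word.
Hypotheses (hx : is_word x) (hy : is_word y).

Lemma seg_iso_functional R : @seg_iso x y R -> forall a b b', R a b -> R a b' -> b = b'.
Proof.
case=> h1 _ _ _ a b b' H H'.
case: (cwo_tot hy b b') => [hl|[//|hl]].
- by case: (cwo_irr hx (proj2 (h1 _ _ _ _ H H') hl)).
- by case: (cwo_irr hx (proj2 (h1 _ _ _ _ H' H) hl)).
Qed.

Lemma seg_iso_injective R : @seg_iso x y R -> forall a a' b, R a b -> R a' b -> a = a'.
Proof.
case=> h1 _ _ _ a a' b H H'.
case: (cwo_tot hx a a') => [hl|[//|hl]].
- by case: (cwo_irr hy (proj1 (h1 _ _ _ _ H H') hl)).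
- by case: (cwo_irr hy (proj1 (h1 _ _ _ _ H' H) hl)).
Qed.

(* A disagreement at [a] yields one strictly below [a]. *)
Lemma seg_iso_agree R1 R2 : @seg_iso x y R1 -> @seg_iso x y R2 ->
  forall a b1 b2, R1 a b1 -> R2 a b2 -> b1 = b2.
Proof.
move=> P1 P2 a; elim: (cwo_wf hx a) => {}a _ IH b1 b2 H1 H2.
have [h1 h2 h3 _] := P1; have [k1 k2 k3 _] := P2.
case: (cwo_tot hy b1 b2) => [hl|[//|hl]].
- have [a' Ha'] := k3 _ _ _ H2 hl; have ha := proj2 (k1 _ _ _ _ Ha' H2) hl.
  have [c Hc] := h2 _ _ _ H1 ha; have ec := IH _ ha _ _ Hc Ha'; subst c.
  by move: ha; rewrite (seg_iso_injective P1 Hc H1) => /(cwo_irr hx).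
- have [a' Ha'] := h3 _ _ _ H1 hl; have ha := proj2 (h1 _ _ _ _ Ha' H1) hl.
  have [c Hc] := k2 _ _ _ H2 ha; have ec := IH _ ha _ _ Ha' Hc; subst c.
  by move: ha; rewrite (seg_iso_injective P2 Hc H2) => /(cwo_irr hx).
Qed.

Lemma seg_iso_cut (R1 R2 : wcar x -> wcar y -> Prop) a b c :
  seg_iso R1 -> seg_iso R2 -> cut_at R1 a b -> R2 a c -> c = b.
Proof.
move=> P1 P2 [hd hr] H2; have [k1 k2 k3 _] := P2.
case: (cwo_tot hy c b) => [hl|[//|hl]].
- have [a' Ha'] := proj2 (hr c) hl.
  have ha : wlt a' a by apply/(hd a'); exists c.
  have [c' Hc'] := k2 _ _ _ H2 ha.
  have ec := seg_iso_agree P1 P2 Ha' Hc'; subst c'.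
  by move: ha; rewrite (seg_iso_injective P2 Hc' H2) => /(cwo_irr hx).
- have [a' Ha'] := k3 _ _ _ H2 hl.
  have [c' Hc'] := proj2 (hd a') (proj2 (k1 _ _ _ _ Ha' H2) hl).
  have ec := seg_iso_agree P1 P2 Hc' Ha'; subst c'.
  by case: (cwo_irr hy (proj1 (hr b) (ex_intro _ a' Hc'))).
Qed.

Lemma seg_iso_cut_unique (R1 R2 : wcar x -> wcar y -> Prop) a b1 b2 :
  seg_iso R1 -> seg_iso R2 -> cut_at R1 a b1 -> cut_at R2 a b2 -> b1 = b2.
Proof.
move=> P1 P2 [hd1 hr1] [hd2 hr2]; apply: (cwo_downset_inj hy) => c.
split=> [/hr1 [a' H1]|/hr2 [a' H2]].
- have [c' H2] := proj2 (hd2 a') (proj1 (hd1 a') (ex_intro _ c H1)).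
  by apply/hr2; exists a'; rewrite (seg_iso_agree P1 P2 H1 H2).
- have [c' H1] := proj2 (hd1 a') (proj1 (hd2 a') (ex_intro _ c H2)).
  by apply/hr1; exists a'; rewrite -(seg_iso_agree P1 P2 H1 H2).
Qed.

Lemma seg_iso_weq R : @seg_iso x y R -> ltotal R -> rtotal R -> weq x y.
Proof.
move=> P F S; have [h1 _ _ h4] := P.
have [f Hf] := ClassicalEpsilon.choice _ F.
have [g Hg] : exists g, forall b, R (g b) b := ClassicalEpsilon.choice (rel_inv R) S.
exists f; split.
- exists g => [a|b].
  + exact (seg_iso_injective P (Hg (f a)) (Hf a)).
  + exact (seg_iso_functional P (Hf (g b)) (Hg b)).
- by move=> a b; apply: h1.
- by move=> a; rewrite (h4 _ _ (Hf a)).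
Qed.

End TwoWords.

Lemma cut_at_inv x y (R : wcar x -> wcar y -> Prop) a b :
  cut_at R a b -> cut_at (rel_inv R) b a.
Proof. by case. Qed.

Lemma weq_refl (x : word) : weq x x.
Proof. by exists id; split=> //; exists id. Qed.

Lemma weq_seg_iso x y : weq x y ->
  exists R : wcar x -> wcar y -> Prop, [/\ seg_iso R, ltotal R & rtotal R].
Proof.
move=> [f [[g gf fg] hord hlab]]; exists (fun a b => f a = b); split.
- split=> [a b a' b' <- <-|a b a' _ _|a b b' _ _|a b <-] //.
  + by exists (f a').
  + by exists (g b'); rewrite fg.
- by move=> a; exists (f a).
- by move=> b; exists (g b); rewrite fg.
Qed.

Section CutComposition.
Variables (x y z : word) (R1 : wcar x -> wcar y -> Prop) (R2 : wcar y -> wcar z -> Prop).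
Hypotheses (P1 : seg_iso R1) (P2 : seg_iso R2).

Lemma cut_at_comp_l a b c : cut_at R1 a b -> R2 b c -> cut_at (rel_comp R1 R2) a c.
Proof.
have [h1 h2 h3 _] := P1; have [k1 k2 k3 _] := P2.
move=> [hd hr] Hc; split=> [a'|c'].
- split=> [[c' [b' [H1 _]]]|/hd [b' H1]]; first by apply/hd; exists b'.
  have [c' H2] := k2 _ _ _ Hc (proj1 (hr b') (ex_intro _ a' H1)).
  by exists c', b'.
- split=> [[a' [b' [H1 H2]]]|hc].
    by apply/(k1 _ _ _ _ H2 Hc)/hr; exists a'.
  have [b' H2] := k3 _ _ _ Hc hc.
  have [a' H1] := proj2 (hr b') (proj2 (k1 _ _ _ _ H2 Hc) hc).
  by exists a', b'.
Qed.

Lemma cut_at_comp_r a b c : R1 a b -> cut_at R2 b c -> cut_at (rel_comp R1 R2) a c.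
Proof.
have [h1 h2 h3 _] := P1; have [k1 k2 k3 _] := P2.
move=> Ha [hd hr]; split=> [a'|c'].
- split=> [[c' [b' [H1 H2]]]|ha].
    by apply/(h1 _ _ _ _ H1 Ha)/hd; exists c'.
  have [b' H1] := h2 _ _ _ Ha ha.
  have [c' H2] := proj2 (hd b') (proj1 (h1 _ _ _ _ H1 Ha) ha).
  by exists c', b'.
- split=> [[a' [b' [_ H2]]]|/hr [b' H2]]; first by apply/hr; exists b'.
  have [a' H1] := h3 _ _ _ Ha (proj1 (hd b') (ex_intro _ c' H2)).
  by exists a', b'.
Qed.

Lemma cut_at_comp a b c : cut_at R1 a b -> cut_at R2 b c -> cut_at (rel_comp R1 R2) a c.
Proof.
move=> [hd1 hr1] [hd2 hr2]; split=> [a'|c'].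
- split=> [[c' [b' [H1 _]]]|/hd1 [b' H1]]; first by apply/hd1; exists b'.
  have [c' H2] := proj2 (hd2 b') (proj1 (hr1 b') (ex_intro _ a' H1)).
  by exists c', b'.
- split=> [[a' [b' [_ H2]]]|/hr2 [b' H2]]; first by apply/hr2; exists b'.
  have [a' H1] := proj2 (hr1 b') (proj1 (hd2 b') (ex_intro _ c' H2)).
  by exists a', b'.
Qed.

End CutComposition.
End SegmentIsomorphisms.
Arguments wsub {d A} x S.

Section LexOrder.
Context {d : Order.disp_t} {A : finOrderType d}.
Local Notation word := (@word d A).

(* Positional counterparts of [is_prefix], [strlt] and [lexle]. *)
Definition wprefix (x y : word) :=
  exists R : wcar x -> wcar y -> Prop, seg_iso R /\ ltotal R.
Definition wstrlt (x y : word) :=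
  exists (R : wcar x -> wcar y -> Prop) a b,
    [/\ seg_iso R, cut_at R a b & (wlab a < wlab b)%O].
Definition wle (x y : word) := wprefix x y \/ wstrlt x y.

Lemma wprefix_refl x : wprefix x x.
Proof. by exists (fun a b => a = b); split=> [|a]; [apply: seg_iso_id | exists a]. Qed.

Lemma wprefix_trans x y z : wprefix x y -> wprefix y z -> wprefix x z.
Proof.
move=> [R1 [P1 F1]] [R2 [P2 F2]]; exists (rel_comp R1 R2).
by split; [apply: seg_iso_comp | apply: ltotal_comp].
Qed.

Lemma wstrlt_wprefix_trans x y z : wstrlt x y -> wprefix y z -> wstrlt x z.
Proof.
move=> [R1 [a [b [P1 C1 hl]]]] [R2 [P2 F2]]; have [c Hc] := F2 b.
exists (rel_comp R1 R2), a, c; split; first exact: seg_iso_comp.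
- exact: (cut_at_comp_l P1 P2 C1 Hc).
- by case: P2 => _ _ _ /(_ _ _ Hc) <-.
Qed.

Lemma wprefix_wstrlt_trans x y z : is_word y ->
  wprefix x y -> wstrlt y z -> wle x z.
Proof.
move=> hy [R1 [P1 F1]] [R2 [a2 [b2 [P2 C2 hl]]]].
case: (classic (exists a1, R1 a1 a2)) => [[a1 Ha1]|hn].
- right; exists (rel_comp R1 R2), a1, b2; split; first exact: seg_iso_comp.
  + exact: (cut_at_comp_r P1 P2 Ha1 C2).
  + by case: P1 => _ _ _ /(_ _ _ Ha1) ->.
- left; exists (rel_comp R1 R2); split; first exact: seg_iso_comp.
  have [_ _ h3 _] := P1; move=> a; have [b Hb] := F1 a.
  have hb : wlt b a2.
    case: (cwo_tot hy b a2) => [//|[eb|hlt]]; first by subst; case: hn; exists a.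
    by have [a' Ha'] := h3 _ _ _ Hb hlt; case: hn; exists a'.
  by have [c Hc] := proj2 (proj1 C2 b) hb; exists c, b.
Qed.

Lemma wstrlt_trans x y z : is_word y -> wstrlt x y -> wstrlt y z -> wstrlt x z.
Proof.
move=> hy [R1 [a1 [b1 [P1 C1 hl1]]]] [R2 [a2 [b2 [P2 C2 hl2]]]].
have [_ _ _ h4] := P1; have [_ _ _ k4] := P2.
case: (cwo_tot hy b1 a2) => [hlt|[eb|hlt]].
- have [c Hc] := proj2 (proj1 C2 b1) hlt.
  exists (rel_comp R1 R2), a1, c; split; first exact: seg_iso_comp.
  + exact: (cut_at_comp_l P1 P2 C1 Hc).
  + by rewrite -(k4 _ _ Hc).
- subst a2; exists (rel_comp R1 R2), a1, b2; split; first exact: seg_iso_comp.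
  + exact: (cut_at_comp C1 C2).
  + exact: lt_trans hl1 hl2.
- have [a Ha] := proj2 (proj2 C1 a2) hlt.
  exists (rel_comp R1 R2), a, b2; split; first exact: seg_iso_comp.
  + exact: (cut_at_comp_r P1 P2 Ha C2).
  + by rewrite (h4 _ _ Ha).
Qed.

Lemma wle_trans x y z : is_word y -> wle x y -> wle y z -> wle x z.
Proof.
move=> hy [H1|H1] [H2|H2].
- by left; apply: wprefix_trans H1 H2.
- exact: wprefix_wstrlt_trans H1 H2.
- by right; apply: wstrlt_wprefix_trans H1 H2.
- by right; apply: wstrlt_trans H1 H2.
Qed.

Lemma wprefix_wle x y : wprefix x y -> wle x y.
Proof. by left. Qed.

Lemma wle_refl x : wle x x.
Proof. exact/wprefix_wle/wprefix_refl. Qed.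

Lemma weq_wprefix x y : weq x y -> wprefix x y.
Proof. by move=> /weq_seg_iso [R [P F _]]; exists R. Qed.

Lemma weq_wprefix_sym x y : weq x y -> wprefix y x.
Proof.
move=> /weq_seg_iso [R [P _ S]]; exists (rel_inv R).
by split; [apply: seg_iso_inv | apply: S].
Qed.

Lemma wstrlt_wprefix_l x y s : wstrlt x y -> wprefix x s -> wstrlt s y.
Proof.
move=> [R1 [a [b [P1 C1 hl]]]] [R [P F]]; have [c Hc] := F a.
exists (rel_comp (rel_inv R) R1), c, b; split.
- exact: seg_iso_comp (seg_iso_inv P) P1.
- exact: (cut_at_comp_r (seg_iso_inv P) P1 (Hc : rel_inv R c a) C1).
- by case: P => _ _ _ /(_ _ _ Hc) <-.
Qed.

Lemma wle_wstrlt_asym x y : is_word x -> is_word y -> wle x y -> wstrlt y x -> False.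
Proof.
move=> hx hy H [R' [a' [b' [P' C' hl']]]].
have [_ _ _ k4] := P'; have C'i := cut_at_inv C'.
case: H => [[R [P F]]|[R [a [b [P C hl]]]]].
- have [c Hc] := F b'; have ec := seg_iso_cut hx hy (seg_iso_inv P') P C'i Hc.
  subst c; case: P => _ _ _ /(_ _ _ Hc) hlab.
  by move: hl'; rewrite hlab ltxx.
- have [_ _ _ h4] := P.
  case: (cwo_tot hx a b') => [hlt|[eab|hlt]].
  + have [c Hc] := proj2 (proj2 C' a) hlt.
    have ec := seg_iso_cut hx hy P (seg_iso_inv P') C Hc; subst c.
    by move: hl; rewrite -(k4 _ _ Hc) ltxx.
  + subst b'; have eb := seg_iso_cut_unique hx hy P (seg_iso_inv P') C C'i.
    by subst a'; move: (lt_trans hl hl'); rewrite ltxx.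
  + have [c Hc] := proj2 (proj1 C b') hlt.
    have ec := seg_iso_cut hx hy (seg_iso_inv P') P C'i Hc; subst c.
    by move: hl'; rewrite -(h4 _ _ Hc) ltxx.
Qed.

Lemma wle_anti x y : is_word x -> is_word y -> wle x y -> wle y x -> weq x y.
Proof.
move=> hx hy H1 [[R' [P' F']]|H2]; last by case: (wle_wstrlt_asym hx hy H1 H2).
case: H1 => [[R [P F]]|H1]; last first.
  by case: (wle_wstrlt_asym hy hx (or_introl (ex_intro _ R' (conj P' F'))) H1).
apply: (seg_iso_weq hx hy P F) => b; have [a Ha] := F' b; have [c Hc] := F a.
by exists a; rewrite (seg_iso_agree hx hy (seg_iso_inv P') P Ha Hc).
Qed.

Lemma proper_prefix_not_wle x y (R : wcar x -> wcar y -> Prop) :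
  is_word x -> is_word y -> seg_iso R -> ltotal R -> ~ rtotal R -> ~ wle y x.
Proof.
move=> hx hy P F NS [[R' [P' F']]|H].
- apply: NS => b; have [a Ha] := F' b; have [c Hc] := F a.
  have Hbc : rel_comp R' R b c by exists a.
  by exists a; rewrite -(seg_iso_agree hy hy (seg_iso_comp P' P) (seg_iso_id y) Hbc erefl).
- apply: (wle_wstrlt_asym hy hy (or_introl (wprefix_refl y))).
  exact: wstrlt_wprefix_trans H (ex_intro _ R (conj P F)).
Qed.

Lemma wprefix_of_wle y x s : is_word x -> is_word s ->
  wle y x -> wle x s -> wprefix y s -> wprefix y x.
Proof.
move=> hx hs [//|H] Hxs Hys.
by case: (wle_wstrlt_asym hx hs Hxs (wstrlt_wprefix_l H Hys)).
Qed.

End LexOrder.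

Section Prefixes.
Context {d : Order.disp_t} {A : finOrderType d}.
Local Notation word := (@word d A).

Lemma wcat_word x y : is_word x -> is_word y -> is_word (@wcat d A x y).
Proof.
move=> hx hy; have [[fx hfx] _ _ _ _] := hx; have [[fy hfy] _ _ _ _] := hy.
have accl a : Acc (@wlt _ _ (wcat x y)) (inl a).
  elim: (cwo_wf hx a) => {}a _ IH; constructor=> -[a'|//] /= ha; exact: IH.
split.
- exists (fun s => pickle (match s with inl a => inl (fx a) | inr b => inr (fy b) end
                          : nat + nat)).
  by move=> [a|b] [a'|b'] /(pcan_inj (@pickleK _)) // [] => [/hfx|/hfy] ->.
- by move=> [a|b] /=; apply: cwo_irr.
- by move=> [a|b] [a'|b'] [a''|b''] //=; apply: cwo_trans.
- move=> [a|b] [a'|b'] /= hne; try tauto.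
  + by case: (cwo_tot hx a a') => [|[ea|]]; [left|subst|right].
  + by case: (cwo_tot hy b b') => [|[eb|]]; [left|subst|right].
- move=> [a|b]; first exact: accl.
  elim: (cwo_wf hy b) => {}b _ IH; constructor=> -[a'|b'] /= hb; [exact: accl|exact: IH].
Qed.

Lemma is_prefix_wprefix (p x : word) : is_prefix p x -> wprefix p x.
Proof.
move=> [z [_ [f [[g gf fg] hord hlab]]]].
exists (fun a b => f b = inl a); split; last by move=> a; exists (g (inl a)); rewrite fg.
split=> [a b a' b' H H'|a b a' H _|a b b' H|a b H].
- by rewrite hord H H'.
- by exists (g (inl a')); rewrite fg.
- by rewrite hord H; case: (f b') => [a'|//] _; exists a'.
- by rewrite -hlab H.
Qed.

Lemma wprefix_split (x y : word) (R : wcar x -> wcar y -> Prop) (Z : wcar y -> Prop) :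
  is_word x -> is_word y -> seg_iso R -> ltotal R ->
  (forall b, Z b <-> ~ exists a, R a b) -> weq y (wcat x (wsub y Z)).
Proof.
move=> hx hy P F hZ; have [h1 h2 h3 h4] := P.
have lt_out b b' : (exists a, R a b) -> Z b' -> wlt b b'.
  move=> [a Ha] /hZ hb'; case: (cwo_tot hy b b') => [//|[eb|hlt]].
    by subst; case: hb'; exists a.
  by case: hb'; apply: h3 Ha hlt.
have in_out : forall b, (exists a, R a b) \/ Z b.
  by move=> b; case: (classic (exists a, R a b)) => h; [left|right; apply/hZ].
pose Rs b (s : wcar (wcat x (wsub y Z))) :=
  match s with inl a => R a b | inr z => proj1_sig z = b end.
apply: (seg_iso_weq hy (wcat_word hx (wsub_word Z hy)) (R := Rs)).
- split=> [b [a|z] b' [a'|z'] /=|b [a|z] b'|b [a|z] [a'|z'] //=|b [a|z] /=].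
  + by move=> H H'; apply: iff_sym; apply: h1.
  + by move=> H <-; split=> // _; apply: lt_out (proj2_sig z'); exists a.
  + move=> <- H'; split=> // hlt.
    by case: (cwo_irr hy (cwo_trans hy hlt (lt_out _ _ (ex_intro _ a' H') (proj2_sig z)))).
  + by move=> <- <-.
  + move=> Ha hlt; case: (in_out b') => [[a' Ha']|hz]; first by exists (inl a').
    by exists (inr (exist _ b' hz)).
  + move=> <- hlt; case: (in_out b') => [[a' Ha']|hz]; first by exists (inl a').
    by exists (inr (exist _ b' hz)).
  + by move=> _ _; exists (proj1_sig z').
  + by move=> /h4.
  + by move=> <-.
- move=> b; case: (in_out b) => [[a Ha]|hz]; first by exists (inl a).
  by exists (inr (exist _ b hz)).
- by move=> [a|z]; [have [b Hb] := F a; exists b | exists (proj1_sig z)].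
Qed.

Lemma wprefix_is_prefix (x y : word) : is_word x -> is_word y -> wprefix x y -> is_prefix x y.
Proof.
move=> hx hy [R [P F]]; exists (wsub y (fun b => ~ exists a, R a b)).
split; first exact: wsub_word.
by apply: (wprefix_split (R := R)) => // b.
Qed.

Lemma strlt_wstrlt (x y : word) : strlt x y -> wstrlt x y.
Proof.
move=> [a [b [w [z [z' [hab _ _ _ [Hx Hy]]]]]]].
move: Hx Hy => [f [[g gf fg] hord hlab]] [f' [[g' gf' fg'] hord' hlab']].
pose R c c' := exists v : wcar w, f c = inl (inl v) /\ f' c' = inl (inl v).
exists R, (g (inl (inr tt))), (g' (inl (inr tt))); split.
- split=> [c c' e e' [v [H1 H2]] [v' [H3 H4]]|c c' e [v [H1 H2]]|
           c c' e' [v [H1 H2]]|c c' [v [H1 H2]]].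
  + by rewrite hord hord' H1 H2 H3 H4.
  + rewrite hord H1; case E: (f e) => [[v'|t]|t] //= _.
    by exists (g' (inl (inl v'))), v'; rewrite fg'.
  + rewrite hord' H2; case E: (f' e') => [[v'|t]|t] //= _.
    by exists (g (inl (inl v'))), v'; rewrite fg.
  + by rewrite -hlab -(hlab' c') H1 H2.
- split=> [c|c']; split.
  + by move=> [c' [v [H1 _]]]; rewrite hord H1 fg.
  + rewrite hord fg; case E: (f c) => [[v|t]|t] //= _.
    by exists (g' (inl (inl v))), v; rewrite fg'.
  + by move=> [c [v [_ H2]]]; rewrite hord' H2 fg'.
  + rewrite hord' fg'; case E: (f' c') => [[v|t]|t] //= _.
    by exists (g (inl (inl v))), v; rewrite fg.
- by rewrite -hlab -hlab' fg fg'.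
Qed.

Lemma lexle_wle (x y : word) : lexle x y -> wle x y.
Proof. by case=> [/is_prefix_wprefix|/strlt_wstrlt]; [left|right]. Qed.

Lemma seg_iso_wsub (x : word) (S : wcar x -> Prop) :
  (forall a a', S a -> wlt a' a -> S a') ->
  seg_iso (fun (s : wcar (wsub x S)) b => proj1_sig s = b).
Proof.
move=> hS; split=> [s b s' b' <- <-|s b s' _ _|[a ha] b b' /= eab hlt|s b <-] //.
- by exists (proj1_sig s').
- by subst b; exists (exist _ b' (hS _ _ ha hlt)).
Qed.

(* [S] may be empty: here the word itself counts as one of its suffixes. *)
Lemma prime_wle_suffix (p : word) (S : wcar p -> Prop) : is_word p -> prime_word p ->
  (forall a a', S a -> wlt a' a -> S a') -> (exists a, ~ S a) ->
  wle p (wsub p (fun a => ~ S a)).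
Proof.
move=> hp [_ hpr] hS [a1 h1].
case: (classic (exists a, S a)) => [[a0 h0]|hn]; last first.
  left; exists (rel_inv (fun (s : wcar (wsub p (fun a => ~ S a))) b => proj1_sig s = b)).
  split; first by apply/seg_iso_inv/seg_iso_wsub => a a' _ _ ha'; apply: hn; exists a'.
  by move=> a; exists (exist _ a (fun h => hn (ex_intro _ a h))).
have hsub : is_word (wsub p S) := wsub_word S hp.
have ne0 : nonempty_word (wsub p S) := inhabits (exist _ a0 h0).
have ne1 : nonempty_word (wsub p (fun a => ~ S a)) := inhabits (exist _ a1 h1).
apply/lexle_wle/hpr; first exact: wsub_word.
exists (wsub p S); split=> //.
apply: (wprefix_split hsub hp (seg_iso_wsub hS)) => [a|b]; first by exists (proj1_sig a).
split=> [hb [[a ha] /= eab]|hb hs]; first by subst; apply: hb.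
by apply: hb; exists (exist _ b hs).
Qed.

Lemma downset_family_least (x : word) (K : Type) (P : K -> Prop) (S : K -> wcar x -> Prop) :
  is_word x -> (exists k, P k) -> (forall k a a', S k a -> wlt a' a -> S k a') ->
  exists k1, P k1 /\ forall k a, P k -> S k1 a -> S k a.
Proof.
move=> hx [k0 Pk0] hS.
case: (classic (exists a k, P k /\ ~ S k a)) => [hex|hn]; last first.
  by exists k0; split=> // k a Pk _; apply: NNPP => hs; apply: hn; exists a, k.
have [m [[k1 [Pk1 Hm]] hmin]] := cwo_min hx hex.
exists k1; split=> // k a Pk Ha; apply: NNPP => hs.
case: (cwo_tot hx a m) => [hl|[eam|hl]].
- by apply: (hmin a) => //; exists k.
- by subst; case: Hm.
- by apply: Hm; apply: hS Ha hl.
Qed.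

(* The images of the [y k] in [x] are downsets of a well-order. *)
Lemma shortest_wprefix (x : word) (K : Type) (P : K -> Prop) (y : K -> word) :
  is_word x -> (forall k, is_word (y k)) -> (exists k, P k) ->
  (forall k, P k -> wprefix (y k) x) ->
  exists k0, P k0 /\ forall k, P k -> wprefix (y k0) (y k).
Proof.
move=> hx hy hP hpre.
pose S k m :=
  exists Q : wcar (y k) -> wcar x -> Prop, [/\ seg_iso Q, ltotal Q & exists e, Q e m].
have hS k m m' : S k m -> wlt m' m -> S k m'.
  move=> [Q [PQ FQ [e He]]] hlt; have [_ _ h3 _] := PQ; have [e' He'] := h3 _ _ _ He hlt.
  by exists Q; split=> //; exists e'.
have [k0 [Pk0 hmin]] := downset_family_least hx hP hS.
exists k0; split=> // k Pk; have [Q0 [P0 F0]] := hpre k0 Pk0; have [Q [PQ FQ]] := hpre k Pk.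
exists (rel_comp Q0 (rel_inv Q)); split; first exact: seg_iso_comp P0 (seg_iso_inv PQ).
move=> e; have [m Hm] := F0 e.
have [Q' [P' _ [e' He']]] := hmin k m Pk (ex_intro _ Q0 (And3 P0 F0 (ex_intro _ e Hm))).
have [m' Hm'] := FQ e'; have emm := seg_iso_agree (hy k) hx P' PQ He' Hm'; subst m'.
by exists e', m.
Qed.
End Prefixes.

Section Products.
Context {d : Order.disp_t} {A : finOrderType d}.
Local Notation word := (@word d A).
Variables (I : Type) (ltI : I -> I -> Prop) (u : I -> word).
Hypotheses (hI : is_cwo ltI) (hu : forall i, is_word (u i)).
Local Notation W := (wprod ltI u).
Local Notation mkW := (existT (fun i => wcar (u i))).

Lemma wprod_lt_same i (a b : wcar (u i)) : wlt (mkW i a : wcar W) (mkW i b) <-> wlt a b.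
Proof.
split=> [[/= /(cwo_irr hI) //|[i' [a' [b' [e1 e2 h]]]]]|h]; last by right; exists i, a, b.
have ei := f_equal (@projT1 _ _) e1; simpl in ei; subst i'.
by have -> := inj_pairT2 _ _ _ _ _ e1; have -> := inj_pairT2 _ _ _ _ _ e2.
Qed.

Lemma wprod_lt_index (x y : wcar W) :
  wlt x y -> ltI (projT1 x) (projT1 y) \/ projT1 x = projT1 y.
Proof. by case=> [|[i [a [b [-> -> _]]]]]; [left|right]. Qed.

Lemma wprod_lt_index_le (x y : wcar W) : wlt x y -> ~ ltI (projT1 y) (projT1 x).
Proof.
move=> hxy h'; case: (wprod_lt_index hxy) => [h|h].
- exact: (cwo_irr hI (cwo_trans hI h h')).
- by rewrite h in h'; apply: (cwo_irr hI h').
Qed.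

Lemma wprod_lt_diff i j (a : wcar (u i)) (b : wcar (u j)) :
  i <> j -> (wlt (mkW i a : wcar W) (mkW j b) <-> ltI i j).
Proof. by move=> ne; split=> [/wprod_lt_index [] // /= /ne|]; left. Qed.

Lemma wprod_word : is_word W.
Proof.
have [[gI hgI] _ _ _ _] := hI.
have inj_u i : exists f : wcar (u i) -> nat, injective f by case: (hu i).
pose F i := proj1_sig (constructive_indefinite_description _ (inj_u i)).
have HF i : injective (F i) := proj2_sig (constructive_indefinite_description _ (inj_u i)).
split.
- exists (fun x : wcar W => pickle (gI (projT1 x), F (projT1 x) (projT2 x))).
  by move=> [i a] [j b] /= /(pcan_inj (@pickleK _)) [/hgI ej]; subst j => /HF ->.
- by move=> [i a] /wprod_lt_same /(cwo_irr (hu i)).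
- move=> [i a] [j b] [k c]; case: (classic (i = j)) => [eij|nij].
    subst j => /wprod_lt_same h1; case: (classic (i = k)) => [eik|nik].
      by subst k => /wprod_lt_same h2; apply/wprod_lt_same; apply: (cwo_trans (hu i) h1 h2).
    by move/(wprod_lt_diff _ _ nik) => h2; left.
  move/(wprod_lt_diff _ _ nij) => /= h1; case: (classic (j = k)) => [ejk|njk].
    by subst k => _; left.
  by move/(wprod_lt_diff _ _ njk) => /= h2; left; apply: (cwo_trans hI h1 h2).
- move=> [i a] [j b] ne; case: (classic (i = j)) => [eij|nij].
    subst j; case: (cwo_tot (hu i) a b) => [h|[eab|h]].
    + by left; apply/wprod_lt_same.
    + by subst.
    + by right; apply/wprod_lt_same.
  by case: (cwo_tot hI i j) => [h|[//|h]]; [left; left|right; left].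
- move=> [i a]; elim: (cwo_wf hI i) a => {}i _ IHi a.
  elim: (cwo_wf (hu i) a) => {}a _ IHa; constructor=> -[j b] h.
  case: (classic (j = i)) => [eji|nji]; last first.
    exact: (IHi j (proj1 (wprod_lt_diff _ _ nji) h)).
  by subst j; apply: IHa; apply/wprod_lt_same.
Qed.

End Products.

Definition sub_lt (I : Type) (ltI : I -> I -> Prop) (E : I -> Prop) (j j' : {i | E i}) :=
  ltI (proj1_sig j) (proj1_sig j').

Section Powers.
Context {d : Order.disp_t} {A : finOrderType d}.
Local Notation word := (@word d A).
Variables (I : Type) (ltI : I -> I -> Prop) (u : I -> word).
Hypothesis hI : is_cwo ltI.
Local Notation W := (wprod ltI u).
Local Notation mkW := (existT (fun i => wcar (u i))).

Lemma weq_wpow_of_blocks (x c : word) (E : I -> Prop) (R : wcar x -> wcar W -> Prop) :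
  is_word x -> is_word c ->
  (forall a b a' b', R a b -> R a' b' -> (wlt a a' <-> wlt b b')) ->
  (forall a b, R a b -> wlab a = wlab b) -> ltotal R ->
  (forall w, (exists a, R a w) <-> E (projT1 w)) -> (forall i, E i -> weq (u i) c) ->
  weq x (wpow (sub_lt ltI (E:=E)) c).
Proof.
move=> hx hc h1 h4 F hran hE.
have hEj (j : {i | E i}) := hE _ (proj2_sig j).
pose f j := proj1_sig (constructive_indefinite_description _ (hEj j)).
have hf j : [/\ bijective (f j), forall a b, wlt a b <-> wlt (f j a) (f j b)
              & forall a, wlab (f j a) = wlab a].
  exact: proj2_sig (constructive_indefinite_description _ (hEj j)).
pose R2 a (y : wcar (wpow (sub_lt ltI (E:=E)) c)) :=
  let: existT j c1 := y in exists e, R a (mkW (proj1_sig j) e) /\ f j e = c1.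
have F2 : ltotal R2.
  move=> a; have [[i e] Ha] := F a; have hi := proj1 (hran _) (ex_intro _ a Ha).
  by exists (existT _ (exist _ i hi) (f (exist _ i hi) e)), e.
have S2 : rtotal R2.
  move=> [[i hi] c1]; have [[g _ fg] _ _] := hf (exist _ i hi).
  have [a Ha] := proj2 (hran (mkW i (g c1))) hi.
  by exists a, (g c1); rewrite fg.
have hJ : is_cwo (sub_lt ltI (E:=E)) := cwo_sig E hI.
have hpow : is_word (wpow (sub_lt ltI (E:=E)) c) := wprod_word hJ (fun=> hc).
apply: (seg_iso_weq hx hpow (R := R2)) => //.
split=> [a [j c1] a' [j' c2] [e [H1 <-]] [e' [H1' <-]]|a y a' _ _|a y y' _ _|
         a [j c1] [e [H1 <-]]].
- rewrite (h1 _ _ _ _ H1 H1'); case: (classic (j = j')) => [ej|nj].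
    subst j'; have [_ hford _] := hf j.
    apply: (iff_trans (wprod_lt_same (u := u) hI e e')); apply: (iff_trans (hford e e')).
    by apply: iff_sym; apply: (wprod_lt_same (u := fun=> c) hJ).
  have ne : proj1_sig j <> proj1_sig j'.
    move: j j' nj {e e' H1 H1'} => [i hi] [i' hi'] /= nj ei.
    by apply: nj; apply: subset_eq_compat.
  apply: (iff_trans (wprod_lt_diff ltI e e' ne)).
  by apply: iff_sym; apply: (wprod_lt_diff (sub_lt ltI (E:=E)) (u := fun=> c) _ _ nj).
- exact: F2.
- exact: S2.
- by have [_ _ hlab] := hf j; rewrite /= hlab (h4 _ _ H1).
Qed.
End Powers.

Section PrimePowers.
Context {d : Order.disp_t} {A : finOrderType d}.
Local Notation word := (@word d A).

(* An empty word is its own power over an empty index, against primitivity. *)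
Lemma prime_nonempty (w : word) : is_word w -> prime_word w -> nonempty_word w.
Proof.
move=> hw [hprim _]; apply: NNPP => hne.
have empty (a : wcar w) : False by apply: hne; constructor.
have hF : is_cwo (fun _ _ : False => False).
  by split=> [|||[]|[]] //; exists (False_rect nat) => [[]].
have hpow : weq w (wpow (fun _ _ : False => False) w).
  exists (fun a => False_rect _ (empty a)); split=> [|a|a]; try by case: (empty a).
  by exists (fun y => False_rect _ (projT1 y)) => [a|[[]]]; case: (empty a).
by have [[[]]] := hprim _ _ w hF hw hpow.
Qed.

Section PowerOfProperPrefix.
Variables (J : Type) (ltJ : J -> J -> Prop) (w v : word).
Hypotheses (hJ : is_cwo ltJ) (hw : is_word w) (hv : is_word v).
Hypotheses (hprime : prime_word w) (hvw : wprefix v w) (hwv : ~ wprefix w v).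
Local Notation V := (wpow ltJ v).
Local Notation mkV := (existT (fun _ : J => wcar v)).

Let hV : is_word V := wprod_word hJ (fun=> hv).

Section SuffixAtBlock.
Variables (Rx : wcar w -> wcar V -> Prop) (r : J).
Hypotheses (PX : seg_iso Rx) (bound : forall a y, Rx a y -> ~ ltJ r (projT1 y)).

Definition maps_before a := exists y, Rx a y /\ ltJ (projT1 y) r.

Local Notation z := (wsub w (fun a => ~ maps_before a)).

(* [z] is the suffix of [w] whose image starts at block [r]; [suffix_rel] reads
   that image inside the copy of [v] at [r]. *)
Definition suffix_rel (a : wcar z) (e : wcar v) := Rx (proj1_sig a) (mkV r e).

Lemma maps_before_down a a' : maps_before a -> wlt a' a -> maps_before a'.
Proof.
move=> [y [Hy hy]] hlt; have [h1 h2 _ _] := PX; have [y' Hy'] := h2 _ _ _ Hy hlt.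
exists y'; split=> //; have := proj1 (h1 _ _ _ _ Hy' Hy) hlt.
by case/wprod_lt_index => [h|->]; [apply: (cwo_trans hJ h hy)|].
Qed.

Lemma suffix_in_block (a : wcar z) y : Rx (proj1_sig a) y -> projT1 y = r.
Proof.
move: a => [a ha] /= Hy.
case: (cwo_tot hJ (projT1 y) r) => [hlt|[//|hlt]]; last by case: (bound Hy hlt).
by case: ha; exists y.
Qed.

Lemma suffix_rel_of (a : wcar z) y : Rx (proj1_sig a) y -> exists e, suffix_rel a e.
Proof.
move=> Hy; have := suffix_in_block Hy; case: y Hy => [j e] /= Hy ej; subst j.
by exists e.
Qed.

Lemma not_maps_before a e : Rx a (mkV r e) -> ~ maps_before a.
Proof.
move=> Ha [y [Hy hy]]; rewrite -(seg_iso_functional hw hV PX Ha Hy) /= in hy.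
exact: (cwo_irr hJ hy).
Qed.

Lemma seg_iso_suffix_rel : seg_iso suffix_rel.
Proof.
have [h1 h2 h3 h4] := PX; rewrite /suffix_rel.
split=> [a e a' e' H H'|a e a' H hlt|a e e' H hlt|a e /h4 //].
- by apply: (iff_trans (h1 _ _ _ _ H H')); apply: (wprod_lt_same hJ).
- have [y Hy] := h2 _ _ _ H hlt; exact: suffix_rel_of Hy.
- have [a' Ha'] := h3 _ _ _ H (proj2 (wprod_lt_same (u := fun=> v) hJ e' e) hlt).
  by exists (exist _ a' (not_maps_before Ha')).
Qed.

Lemma wle_suffix : (exists a, ~ maps_before a) -> wle v z.
Proof.
move=> hout; apply: (wle_trans hw (wprefix_wle hvw)).
exact: prime_wle_suffix hw hprime maps_before_down hout.
Qed.

End SuffixAtBlock.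

(* If the embedding of [w] stops inside a block, the suffix of [w] starting at
   that block is a proper prefix of [v]; otherwise [w] is a power of [v]. *)
Lemma prime_not_wprefix_wpow : ~ wprefix w V.
Proof.
move=> [Rx [PX FX]]; have [_ _ h3 _] := PX.
pose covered y := exists a, Rx a y.
case: (classic (exists r e1 e2, covered (mkV r e1) /\ ~ covered (mkV r e2)))
  => [[r [e1 [e2 [[a1 Ha1] he2]]]]|hblocks].
- have bound a y : Rx a y -> ~ ltJ r (projT1 y).
    by move=> Hy hlt; apply: he2; apply: h3 Hy _; left.
  have Fz : ltotal (@suffix_rel Rx r).
    by move=> a; have [y Hy] := FX (proj1_sig a); apply: (suffix_rel_of bound Hy).
  have Hz := wle_suffix PX (ex_intro _ a1 (not_maps_before PX Ha1)).
  apply: (proper_prefix_not_wle (wsub_word _ hw) hv (seg_iso_suffix_rel PX bound) Fz _ Hz).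
  by move=> /(_ e2) [a Ha]; apply: he2; exists (proj1_sig a).
- pose E j := exists e, covered (mkV j e).
  have hran y : covered y <-> E (projT1 y).
    split=> [hy|[e he]]; first by exists (projT2 y); case: y hy.
    apply: NNPP => hy; apply: hblocks; exists (projT1 y), e, (projT2 y).
    by split=> //; case: y hy {he}.
  have [h1 _ _ h4] := PX.
  have := weq_wpow_of_blocks hJ hw hv h1 h4 FX hran (fun _ _ => weq_refl v).
  move=> /(proj1 hprime _ _ _ (cwo_sig E hJ) hv) [_ /weq_wprefix_sym].
  exact: hwv.
Qed.

Lemma prime_not_wstrlt_wpow : ~ wstrlt w V.
Proof.
move=> [Rx [a [[r eb] [PX [hd hr] hl]]]].
have bound a' y : Rx a' y -> ~ ltJ r (projT1 y).
  move=> Hy; apply: (wprod_lt_index_le hJ (y := mkV r eb)).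
  by apply/hr; exists a'.
have na : ~ maps_before Rx r a.
  by move=> [y [Hy _]]; have /(cwo_irr hw) := proj1 (hd a) (ex_intro _ y Hy).
apply: (wle_wstrlt_asym hv (wsub_word _ hw) (wle_suffix PX (ex_intro _ a na))).
exists (@suffix_rel Rx r), (exist _ a na), eb; split=> //.
- exact: (seg_iso_suffix_rel PX bound).
- split=> [a'|e].
  + split=> [[e He]|ha]; first by apply/hd; exists (mkV r e).
    have [y Hy] := proj2 (hd (proj1_sig a')) ha; exact: (suffix_rel_of bound Hy).
  + split=> [[a' Ha']|he].
      by apply/(wprod_lt_same (u := fun=> v) hJ)/hr; exists (proj1_sig a').
    have [a' Ha'] := proj2 (hr (mkV r e)) (proj2 (wprod_lt_same (u := fun=> v) hJ e eb) he).
    by exists (exist _ a' (not_maps_before PX Ha')).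
Qed.

Lemma prime_not_wle_wpow : ~ wle w V.
Proof. by case; [apply: prime_not_wprefix_wpow | apply: prime_not_wstrlt_wpow]. Qed.

End PowerOfProperPrefix.
End PrimePowers.

Section DenseSequences.
Context {d : Order.disp_t} {A : finOrderType d}.
Local Notation word := (@word d A).
Variables (I : Type) (ltI : I -> I -> Prop) (u : I -> word).
Hypotheses (hI : is_cwo ltI) (hu : forall i, is_word (u i)) (hdense : dense_nonincr ltI u).

Lemma below_succ b : exists g', forall c, below ltI c g' <-> c = b \/ ltI c b.
Proof.
case: (classic (exists j, ltI b j)) => [/(cwo_min hI) [n [hbn hmin]]|hmax].
- exists (Some n) => c /=; split=> [hcn|[->|hcb]] //; last exact: (cwo_trans hI hcb hbn).
  by case: (cwo_tot hI c b) => [|[|/hmin]]; [right|left|].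
- exists None => c /=; split=> // _.
  by case: (cwo_tot hI c b) => [|[|hbc]]; [right|left|case: hmax; exists c].
Qed.

(* Density on [[c0, b]] yields [b1 < b2] with [u b2 < u b1]; if [b2 < b], then
   [u b1 <= u c0 <= u b2] is a contradiction. *)
Lemma dense_wle b c0 : ltI c0 b ->
  (forall c, c = c0 \/ ltI c0 c -> ltI c b -> wle (u c) (u c0)) ->
  (forall c, ltI c b -> wprefix (u c0) (u c)) -> wle (u b) (u c0).
Proof.
move=> hc0 hle hpre; have [g' Hg'] := below_succ b.
case: (hdense (proj2 (Hg' c0) (or_intror hc0))) => [H|[b1 [b2 [Hb1 Hb12 /Hg' Hb2 [Hle Hnw]]]]].
  by left; apply: weq_wprefix; apply: H; [right|apply/Hg'; left].
have hb1 : ltI b1 b by case: Hb2 => [<-|/(cwo_trans hI Hb12)].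
have h1 := hle b1 Hb1 hb1.
case: Hb2 => [eb|hb2]; first by subst b2; apply: wle_trans (hu b1) (lexle_wle Hle) h1.
case: Hnw; apply: wle_anti (hu b2) (hu b1) (lexle_wle Hle) _.
exact: wle_trans (hu c0) h1 (wprefix_wle (hpre b2 hb2)).
Qed.
End DenseSequences.

Section LongestPrimePrefix.
Context {d : Order.disp_t} {A : finOrderType d}.
Local Notation word := (@word d A).
Variables (I : Type) (ltI : I -> I -> Prop) (u : I -> word) (i0 : I).
Hypotheses (hI : is_cwo ltI) (hu : forall i, is_word (u i)) (hi0 : forall j, ~ ltI j i0).
Hypotheses (hprime : forall i, prime_word (u i)) (hdense : dense_nonincr ltI u).
Local Notation W := (wprod ltI u).
Local Notation mkW i e := (existT (fun i => wcar (u i)) i e : wcar W).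

Let hW : is_word W := wprod_word hI hu.

Lemma first_le j : j = i0 \/ ltI i0 j.
Proof. by case: (cwo_tot hI j i0) => [/hi0|[|]]; [|left|right]. Qed.

Lemma wprefix_first : wprefix (u i0) W.
Proof.
exists (fun e w => w = mkW i0 e); split=> [|e]; last by exists (mkW i0 e).
split=> [e w e' w' -> ->|e w e' _ _|e w w' ->|e w ->] //.
- by apply: iff_sym; apply: (wprod_lt_same hI).
- by exists (mkW i0 e').
- case/wprod_lt_index => [/hi0 //|]; case: w' => [j e'] /= ej.
  by subst j; exists e'.
Qed.

Lemma exists_first_pos b : exists m : wcar (u b), forall e, ~ wlt e m.
Proof.
have [e] := prime_nonempty (hu b) (hprime b).
have [m [_ hm]] := cwo_min (hu b) (ex_intro (fun=> True) e Logic.I).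
by exists m => e'; apply: hm.
Qed.

Definition first_pos b :=
  proj1_sig (constructive_indefinite_description _ (exists_first_pos b)).

Lemma first_pos_min b e : ~ wlt e (first_pos b).
Proof. exact: (proj2_sig (constructive_indefinite_description _ (exists_first_pos b))). Qed.

Local Notation block_start b := (mkW b (first_pos b)).

Lemma lt_block_start (w : wcar W) b : wlt w (block_start b) <-> ltI (projT1 w) b.
Proof.
split=> hlt; last by left.
case: (wprod_lt_index hlt) => [//|]; case: w hlt => [j e] hlt /= ej; subst j.
by case: (first_pos_min (proj1 (wprod_lt_same hI _ _) hlt)).
Qed.

Section PrimePrefix.
Variables (p : word) (R : wcar p -> wcar W -> Prop).
Hypotheses (hp : is_word p) (hpp : prime_word p) (PR : seg_iso R) (FR : ltotal R).

Definition covered w := exists a, R a w.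
Definition touched b := exists e, covered (mkW b e).
Definition filled b := forall e, covered (mkW b e).

Lemma covered_down w w' : covered w -> wlt w' w -> covered w'.
Proof. by move=> [a Ha] hlt; have [_ _ h3 _] := PR; apply: h3 Ha hlt. Qed.

Lemma touched_block w : covered w -> touched (projT1 w).
Proof. by case: w => j e hw; exists e. Qed.

Lemma covered_of_filled w : filled (projT1 w) -> covered w.
Proof. by case: w => j e /(_ e). Qed.

Lemma wprefix_first_of_covered :
  (forall w, covered w -> projT1 w = i0) -> wprefix p (u i0).
Proof.
move=> hin; have [h1 h2 h3 h4] := PR.
have [f Hf] : exists f, forall a, R a (mkW i0 (f a)).
  apply: (ClassicalEpsilon.choice (fun a e => R a (mkW i0 e))) => a.
  have [[j e] Ha] := FR a; have /= ej := hin _ (ex_intro _ a Ha).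
  by subst j; exists e.
exists (fun a e => R a (mkW i0 e)); split=> [|a]; last by exists (f a).
split=> [a e a' e' H H'|a e a' _ _|a e e' H hlt|a e /h4 //].
- exact: (iff_trans (h1 _ _ _ _ H H') (wprod_lt_same hI _ _)).
- by exists (f a').
- exact: h3 H (proj2 (wprod_lt_same hI _ _) hlt).
Qed.

Section BeyondFirstBlock.
Variable w1 : wcar W.
Hypotheses (Hw1 : covered w1) (Hne1 : projT1 w1 <> i0).

Lemma filled_first : filled i0.
Proof.
move=> e; apply: covered_down Hw1 _; left => /=.
by case: (first_le (projT1 w1)).
Qed.

Lemma filled_before b b' : touched b -> ltI b' b -> filled b'.
Proof. by move=> [e He] hlt e'; apply: covered_down He _; left. Qed.

Definition tail q := wsub W (fun w => covered w /\ ~ wlt w q).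

Lemma wprefix_first_p : wprefix (u i0) p.
Proof.
have [h1 h2 h3 h4] := PR.
exists (fun e a => R a (mkW i0 e)); split=> [|e]; last exact: filled_first.
split=> [e a e' a' H H'|e a e' _ _|e a a' H hlt|e a /h4 //].
- exact: iff_sym (iff_trans (h1 _ _ _ _ H H') (wprod_lt_same hI _ _)).
- exact: filled_first.
- have [w' Hw'] := h2 _ _ _ H hlt; have hw' := proj1 (h1 _ _ _ _ Hw' H) hlt.
  case: w' Hw' hw' => [j e'] Hw' hw'.
  case: (first_le j) => [ej|hj]; first by subst j; exists e'.
  by case: (wprod_lt_index_le hI hw' hj).
Qed.

Lemma wprefix_suffix_tail q aq : R aq q -> wprefix (wsub p (fun a => ~ wlt a aq)) (tail q).
Proof.
move=> Hq; have [h1 h2 h3 h4] := PR.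
have in_tail a w : R a w -> ~ wlt a aq -> covered w /\ ~ wlt w q.
  by move=> H ha; split; [exists a | move/(h1 _ _ _ _ H Hq)].
exists (fun s t => R (proj1_sig s) (proj1_sig t)); split; last first.
  by move=> [a ha]; have [w Hw] := FR a; exists (exist _ w (in_tail _ _ Hw ha)).
split=> [[a ?] [w ?] [a' ?] [w' ?] /= H H'|[a ha] [w hw] [a' ha'] /= H _|
         [a ha] [w hw] [w' [_ hw']] /= H hlt|[a ?] [w ?] /= /h4 //].
- exact: h1.
- by have [w' Hw'] := FR a'; exists (exist _ w' (in_tail _ _ Hw' ha')).
- have [a' Ha'] := h3 _ _ _ H hlt.
  by exists (exist _ a' (fun h => hw' (proj1 (h1 _ _ _ _ Ha' Hq) h))).
Qed.

(* [u i0] is a prefix of [p], and the prime [p] is below its suffix mapped onto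
   [tail q]. *)
Lemma first_le_tail q : covered q -> wle (u i0) (tail q).
Proof.
move=> [aq Hq].
have hsuf : wle p (wsub p (fun a => ~ wlt a aq)).
  apply: (prime_wle_suffix hp hpp _ (ex_intro (fun a => ~ wlt a aq) aq (@cwo_irr _ _ hp aq))).
  by move=> a a' h1 h2; apply: (cwo_trans hp h2 h1).
apply: wle_trans hp (wprefix_wle wprefix_first_p) _.
exact: wle_trans (wsub_word _ hp) hsuf (wprefix_wle (wprefix_suffix_tail Hq)).
Qed.

Lemma tail_block_start_index b (s : wcar (tail (block_start b))) :
  ~ ltI (projT1 (proj1_sig s)) b.
Proof. by case: s => w [_ hw] /= /(lt_block_start w b). Qed.

Lemma wprefix_block_tail b : filled b -> wprefix (u b) (tail (block_start b)).
Proof.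
move=> Fb; have in_tail e : covered (mkW b e) /\ ~ wlt (mkW b e) (block_start b).
  by split=> // /lt_block_start /= /(cwo_irr hI).
pose mk e : wcar (tail (block_start b)) := exist _ (mkW b e) (in_tail e).
exists (fun e s => proj1_sig s = mkW b e); split; last by move=> e; exists (mk e).
split=> [e [w ?] e' [w' ?] /= -> ->|e s e' _ _|e [w hw] s' /= ew hlt|e [w ?] /= ->] //.
- by apply: iff_sym; apply: (wprod_lt_same hI).
- by exists (mk e').
- have := tail_block_start_index (s := s'); move: s' hlt => [[j e'] hs'] hlt /= hj.
  rewrite ew in hlt; have hbj := wprod_lt_index_le hI hlt.
  have ej : j = b by case: (cwo_tot hI j b) => [/hj|[|/hbj]].
  by subst j; exists e'.
Qed.

Lemma wprefix_first_of_wle b : filled b -> wle (u b) (u i0) -> wprefix (u b) (u i0).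
Proof.
move=> Fb Hle; apply: wprefix_of_wle (hu i0) (wsub_word _ hW) Hle _ (wprefix_block_tail Fb).
exact: first_le_tail (Fb (first_pos b)).
Qed.

Lemma touched_wle b : touched b -> forall g, g = b \/ ltI g b -> wle (u b) (u g).
Proof.
elim: (cwo_wf hI b) => {}b _ IH Db g hg.
case: (first_le b) => [eb|hb]; first by subst b; case: hg => [->|/hi0 //]; apply: wle_refl.
have IH' c : ltI c b -> forall g, g = c \/ ltI g c -> wle (u c) (u g).
  by move=> hc; apply: (IH c hc); exists (first_pos c); apply: (filled_before Db hc).
have pre c : ltI c b -> wprefix (u c) (u i0).
  move=> hc; apply: wprefix_first_of_wle (filled_before Db hc) (IH' c hc i0 _).
  by case: (first_le c); [left|right].
have [c0 [hc0 hmin]] := shortest_wprefix (hu i0) hu (ex_intro _ i0 hb) pre.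
have Hb : wle (u b) (u c0).
  apply: (dense_wle hI hu hdense hc0 _ hmin) => c hc hcb.
  by apply: (IH' c hcb c0); case: hc => [->|]; [left|right].
case: hg => [->|hgb]; first exact: wle_refl.
case: (cwo_tot hI g c0) => [hgc|[->//|hcg]].
- exact: wle_trans (hu c0) Hb (IH' c0 hc0 g (or_intror hgc)).
- exact: wle_trans (hu c0) Hb (wprefix_wle (hmin g hgb)).
Qed.

Lemma wprefix_tail_partial k e2 : ~ covered (mkW k e2) ->
  wprefix (tail (block_start k)) (wsub (u k) (fun e => covered (mkW k e))).
Proof.
move=> ne2; set t := wsub (u k) _.
have in_block (s : wcar (tail (block_start k))) : projT1 (proj1_sig s) = k.
  have := tail_block_start_index (s := s).
  case: (cwo_tot hI (projT1 (proj1_sig s)) k) => [hlt /(_ hlt)//|[//|hks _]].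
  by case: ne2; case: s hks => w [hw _] /= hks; apply: covered_down hw _; left.
pose Rt (s : wcar (tail (block_start k))) (e : wcar t) := proj1_sig s = mkW k (proj1_sig e).
have Ft : ltotal Rt.
  move=> s; have := in_block s; case: s => [[j e] [hw hq]] /= ej; subst j.
  by exists (exist _ e hw).
exists Rt; split=> //; rewrite /Rt.
split=> [[w ?] e [w' ?] e' /= -> ->|s e s' _ _|s e e' _ hlt|[w ?] e /= ->] //.
- exact: (wprod_lt_same hI).
- exact: Ft.
- have hq : ~ wlt (mkW k (proj1_sig e')) (block_start k).
    by move/lt_block_start => /= /(cwo_irr hI).
  by exists (exist (fun w => covered w /\ ~ wlt w (block_start k)) _ (conj (proj2_sig e') hq)).
Qed.

Lemma touched_filled k : touched k -> filled k.
Proof.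
move=> Dk; apply: NNPP => nFk.
have [e2 ne2] : exists e, ~ covered (mkW k e).
  by apply: NNPP => h; apply: nFk => e; apply: NNPP => h'; apply: h; exists e.
have Hk : wle (u k) (u i0).
  by apply: (touched_wle Dk); case: (first_le k) => [->|]; [left|right].
have Hq : covered (block_start k).
  case: Dk => e1 He1; case: (cwo_tot (hu k) (first_pos k) e1) => [hlt|[->//|/first_pos_min//]].
  by apply: covered_down He1 _; apply/(wprod_lt_same hI).
set t := wsub (u k) (fun e => covered (mkW k e)).
have Ht : wle (u k) t.
  apply: wle_trans (hu i0) Hk (wle_trans (wsub_word _ hW) (first_le_tail Hq) _).
  exact: wprefix_wle (wprefix_tail_partial ne2).
have hdown e e' : covered (mkW k e) -> wlt e' e -> covered (mkW k e').
  by move=> He hlt; apply: covered_down He _; apply/(wprod_lt_same hI).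
apply: (proper_prefix_not_wle (wsub_word _ (hu k)) (hu k) (seg_iso_wsub hdown) _ _ Ht).
  by move=> e; exists (proj1_sig e).
by move=> /(_ e2) [[e he] /= ee]; subst e; apply: ne2.
Qed.

Lemma weq_tail_wpow c0 :
  (forall r, touched r /\ ~ ltI r c0 -> weq (u r) (u c0)) ->
  weq (tail (block_start c0))
      (wpow (sub_lt ltI (E := fun r => touched r /\ ~ ltI r c0)) (u c0)).
Proof.
move=> hw; pose R0 (s : wcar (tail (block_start c0))) (w : wcar W) := proj1_sig s = w.
apply: (weq_wpow_of_blocks hI (wsub_word _ hW) (hu c0) (R := R0)) => //.
- by move=> s w s' w' <- <-.
- by move=> s w <-.
- by move=> s; exists (proj1_sig s).
move=> w; split=> [[[w' [hw' hq]] /= <-]|[Dw nw]].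
  by split; [apply: touched_block | move/lt_block_start].
have hq : ~ wlt w (block_start c0) by move/lt_block_start.
by exists (exist _ w (conj (covered_of_filled (touched_filled Dw)) hq)).
Qed.

Lemma blocks_not_all_first : ~ (forall r, touched r -> weq (u r) (u i0)).
Proof.
move=> hwi; have [h1 _ _ h4] := PR.
have hran w : covered w <-> touched (projT1 w).
  by split=> [/touched_block|/touched_filled /covered_of_filled].
have := weq_wpow_of_blocks hI hp (hu i0) h1 h4 FR hran hwi.
move=> /(proj1 hpp _ _ _ (cwo_sig _ hI) (hu i0)) [[j0 Hj0] _].
have D0 : touched i0 by exists (first_pos i0); apply: filled_first.
have := Hj0 (exist _ _ (touched_block Hw1)); rewrite -(Hj0 (exist _ _ D0)).
by move/(f_equal (@proj1_sig _ _)).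
Qed.

Lemma beyond_first_block_false : False.
Proof.
have pre r : touched r -> wprefix (u r) (u i0).
  move=> Dr; apply: (wprefix_first_of_wle (touched_filled Dr) (touched_wle Dr _)).
  by case: (first_le r); [left|right].
have D0 : touched i0 by exists (first_pos i0); apply: filled_first.
have [c0 [Dc0 hmin]] := shortest_wprefix (hu i0) hu (ex_intro _ i0 D0) pre.
case: (classic (wprefix (u i0) (u c0))) => [hi0c0|hproper].
  apply: blocks_not_all_first => r Dr; apply: wle_anti (hu r) (hu i0) _ _.
    by apply: (touched_wle Dr); case: (first_le r); [left|right].
  exact: wprefix_wle (wprefix_trans hi0c0 (hmin r Dr)).
have hw r : touched r /\ ~ ltI r c0 -> weq (u r) (u c0).
  move=> [Dr nr]; apply: wle_anti (hu r) (hu c0) _ (wprefix_wle (hmin r Dr)).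
  by apply: (touched_wle Dr); case: (cwo_tot hI r c0) => [/nr|[->|]]; [|left|right].
have Hq : covered (block_start c0) := touched_filled Dc0 _.
apply: (prime_not_wle_wpow (cwo_sig _ hI) (hu i0) (hu c0) (hprime i0) (pre c0 Dc0) hproper).
apply: wle_trans (wsub_word _ hW) (first_le_tail Hq) _.
exact: wprefix_wle (weq_wprefix (weq_tail_wpow hw)).
Qed.
End BeyondFirstBlock.
End PrimePrefix.
End LongestPrimePrefix.

Theorem mainTheorem8 (d : Order.disp_t) (A : finOrderType d)
  (I : Type) (ltI : I -> I -> Prop) (u : I -> @word d A)
  (hI : is_cwo ltI) (hu : forall i, is_word (u i))
  (i0 : I) (hi0 : forall j, ~ ltI j i0)
  (hprime : forall i, prime_word (u i))
  (hdense : dense_nonincr ltI u) :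
  [/\ is_prefix (u i0) (wprod ltI u), prime_word (u i0)
    & forall p : @word d A, is_word p -> prime_word p ->
        is_prefix p (wprod ltI u) -> is_prefix p (u i0)].
Proof.
split; first exact: wprefix_is_prefix (hu i0) (wprod_word hI hu) (wprefix_first u hI hi0).
  exact: hprime i0.
move=> p hp hpp /is_prefix_wprefix [R [PR FR]].
apply: (wprefix_is_prefix hp (hu i0)).
apply: (wprefix_first_of_covered hI PR FR) => w Hw; apply: NNPP => hne.
exact: (beyond_first_block_false hI hu hi0 hprime hdense hp hpp PR FR Hw hne).
Qed.
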